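(* Let $g=\sum_{\alpha\in[0,1)}m(\alpha)[\alpha]$ be an effective divisor on $[0,1)$ of degree $r\geq1$. Then the minimal number $T(g)$, over all arrangements $a_1,\ldots,a_r$ of $g$, of indices $t\in\{1,\ldots,r\}$ with $a_t\geq a_{t+1}$ (indices modulo $r$, $a_{r+1}=a_1$) equals the maximal multiplicity: $T(g)=\max_\alpha m(\alpha)$.
   Context: An arrangement of $g$ is a sequence $a_1,\ldots,a_r\in[0,1)$ in which each $\alpha$ appears exactly $m(\alpha)$ times. *)

From HB Require Import structures.
From mathcomp Require Import all_boot all_order all_algebra.
From mathcomp Require Import reals.
Set Implicit Arguments. Unset Strict Implicit. Unset Printing Implicit Defensive.
Import Order.TTheory GRing.Theory Num.Theory.
Local Open Scope ring_scope.

(* An effective divisor g on [0,1) of degree r is represented by a finite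
   sequence of points of [0,1) (a multiset, taken up to permutation);
   the multiplicity m(alpha) is the number of occurrences of alpha. *)
Definition effective_divisor01 {R : realType} (g : seq R) : Prop :=
  all (fun a => (0 <= a) && (a < 1)) g.

Definition mult {R : realType} (g : seq R) (alpha : R) : nat := count_mem alpha g.

Definition max_mult {R : realType} (g : seq R) : nat :=
  (\max_(a <- g) mult g a)%N.

Definition arrangement {R : realType} (g s : seq R) : Prop :=
  forall alpha : R, count_mem alpha s = mult g alpha.

Definition cyc_descents {R : realType} (s : seq R) : nat :=
  \big[addn/0%N]_(t < size s)
     nat_of_bool (nth (0:R) s (t.+1 %% size s)%N <= nth (0:R) s t).

From HB Require Import structures.
From mathcomp Require Import all_boot all_order all_algebra.
From mathcomp Require Import reals.
Set Implicit Arguments. Unset Strict Implicit. Unset Printing Implicit Defensive.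
Import Order.TTheory GRing.Theory Num.Theory.

(* Lower bound: cyclically, between two consecutive occurrences of alpha the
   sequence must come back down to alpha, so each occurrence of alpha is
   followed by a descent before the next one; hence m(alpha) <= T.
   Upper bound: list the support of g in increasing order max m(alpha) times,
   keeping in the k-th round only the points of multiplicity > k.  Each round is
   strictly increasing, so descents only occur where a round starts. *)

Section PathDescents.

Variables (disp : Order.disp_t) (T : orderType disp).

Fixpoint path_descents (x : T) (t : seq T) : nat :=
  if t is y :: t' then ((y <= x)%O + path_descents y t')%N else 0%N.

Lemma path_descents_cat x b t :
  path_descents x (b ++ t) = (path_descents x b + path_descents (last x b) t)%N.
Proof. by elim: b x => [|y b IH] x //=; rewrite IH addnA. Qed.

Lemma path_descents_lt_path x b : path <%O x b -> path_descents x b = 0%N.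
Proof. by elim: b x => [|y b IH] x //= /andP[xy /IH->]; rewrite leNgt xy. Qed.

Lemma path_descents_flatten_sorted x bs :
  all (sorted <%O) bs -> (path_descents x (flatten bs) <= size bs)%N.
Proof.
elim: bs x => [|b bs IH] x //= /andP[sb /(IH (last x b)) le_bs].
rewrite path_descents_cat -add1n leq_add //.
by case: {le_bs} b sb => [|y b] //= /path_descents_lt_path->; rewrite addn0 leq_b1.
Qed.

(* Each occurrence of a in t is charged to a descent, except possibly the
   last one, which is compensated by the term (a <= last x t). *)
Lemma count_mem_path_descents a x t :
  (count_mem a t + (a <= x)%O <= path_descents x t + (a <= last x t)%O)%N.
Proof.
elim: t x => [|y t IH] x //=; have := IH y.
have le_head : ((y == a) + (a <= x)%O <= (y <= x)%O + (a <= y)%O)%N.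
  case: eqVneq => [->|_]; first by rewrite lexx addnC.
  case: (leP a x) => ax; case: (leP a y) => ya; rewrite ?addn0 ?addn1 ?leq_b1 //.
  by rewrite (ltW (lt_le_trans ya ax)).
move=> le_tail; rewrite -(leq_add2r (a <= y)%O); have := leq_add le_head le_tail.
by rewrite addnACA addnA [X in (_ <= X)%N]addnACA [(_ + (_ <= last y t)%O)%N]addnC addnA.
Qed.

End PathDescents.

Section CyclicDescents.

Variable R : realType.
Implicit Types (s t : seq R) (x a : R).

Lemma path_descents_nth x t :
  path_descents x t = \sum_(i < size t) (nth 0%R t i <= nth 0%R (x :: t) i)%R.
Proof.
elim: t x => [|y t IH] x; first by rewrite big_ord0.
by rewrite big_ord_recl /= IH.
Qed.

Lemma cyc_descents_cons x t :
  cyc_descents (x :: t) = (path_descents x t + (x <= last x t)%R)%N.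
Proof.
rewrite /cyc_descents big_ord_recr modnn (nth_last 0%R (x :: t)) path_descents_nth.
by congr (_ + _)%N; apply: eq_bigr => i _; rewrite /= modn_small ?ltnS ?ltn_ord.
Qed.

Lemma count_mem_le_cyc_descents a s : (count_mem a s <= cyc_descents s)%N.
Proof.
case: s => [//|x t]; rewrite cyc_descents_cons /=.
have := count_mem_path_descents a x t.
case: eqVneq => [->|_ le_count]; first by rewrite lexx addnC.
have le_last : ((a <= last x t)%R <= (a <= x)%R + (x <= last x t)%R)%N.
  case: (leP a x) => [_|xa]; first exact: leq_trans (leq_b1 _) (leq_addr _ _).
  by case: leP => // /(lt_le_trans xa)/ltW->.
rewrite add0n -(leq_add2r (a <= x)%R); apply: leq_trans le_count _.
by rewrite -addnA leq_add2l addnC.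
Qed.

Lemma cyc_descents_le_path_descents x t :
  (cyc_descents (x :: t) <= path_descents x (x :: t))%N.
Proof. by rewrite cyc_descents_cons /= lexx addnC leq_add2r leq_b1. Qed.

End CyclicDescents.

Section Layers.

Variables (R : realType) (g : seq R).

Definition layer (k : nat) : seq R :=
  [seq x <- sort <=%O (undup g) | (k < mult g x)%N].

Definition layered_arrangement : seq R :=
  flatten [seq layer k | k <- iota 0 (max_mult g)].

Lemma count_mem_layer a k : count_mem a (layer k) = (k < mult g a)%N.
Proof.
rewrite count_filter (eq_count (a2 := fun x => (x == a) && (k < mult g a)%N));
  last by move=> x /=; case: eqVneq => [->|].
case: ltnP => [ka|_]; last first.
  by rewrite (eq_count (a2 := pred0)) ?count_pred0 // => x; rewrite andbF.
rewrite (eq_count (a2 := pred1 a)); last by move=> x; rewrite andbT.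
rewrite count_uniq_mem ?sort_uniq ?undup_uniq // mem_sort mem_undup.
by rewrite -has_pred1 has_count (leq_ltn_trans (leq0n k) ka).
Qed.

Lemma mult_le_max_mult a : (mult g a <= max_mult g)%N.
Proof.
have [ag|nag] := boolP (a \in g); first exact: (leq_bigmax_seq (F := mult g)).
by rewrite /mult (count_memPn nag).
Qed.

Lemma layered_arrangementP : arrangement g layered_arrangement.
Proof.
move=> a; rewrite count_flatten -map_comp.
rewrite (eq_map (g := fun k => nat_of_bool (k < mult g a)%N));
  last exact: count_mem_layer.
rewrite sumn_count -size_filter.
have := filter_iota_ltn 0 (mult_le_max_mult a); rewrite add0n => ->.
exact: size_iota.
Qed.

Lemma cyc_descents_layered : (cyc_descents layered_arrangement <= max_mult g)%N.
Proof.
case def_s: layered_arrangement => [|x t]; first by rewrite /cyc_descents big_ord0.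
apply: leq_trans (cyc_descents_le_path_descents x t) _; rewrite -def_s.
rewrite -[X in (_ <= X)%N](size_iota 0) -(size_map layer).
apply: path_descents_flatten_sorted; apply/allP => b /mapP[k _ ->].
by apply: sorted_filter; [exact: lt_trans | rewrite sort_lt_sorted undup_uniq].
Qed.

End Layers.

Lemma max_mult_le_cyc_descents (R : realType) (g s : seq R) :
  arrangement g s -> (max_mult g <= cyc_descents s)%N.
Proof.
move=> arr; apply/bigmax_leqP_seq => a _ _.
by rewrite -arr count_mem_le_cyc_descents.
Qed.

Theorem lemma6p6 (R : realType) (g : seq R) :
  effective_divisor01 g -> (1 <= size g)%N ->
  (exists s : seq R, arrangement g s /\ cyc_descents s = max_mult g) /\
  (forall s : seq R, arrangement g s -> (max_mult g <= cyc_descents s)%N).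
Proof.
move=> _ _; split; last exact: max_mult_le_cyc_descents.
exists (layered_arrangement g); split; first exact: layered_arrangementP.
apply/eqP; rewrite eqn_leq cyc_descents_layered.
exact/max_mult_le_cyc_descents/layered_arrangementP.
Qed.
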